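(* Let $Q=(G\leftleftarrows A)$ be a group-like graph which is path-connected (as an undirected graph). Then $\phi(I^n(A))=I^{n+1}(G)$ for all $n\ge 0$, where $\phi:\mathbf k[A]\to\mathbf k[G]$ is $\phi(a)=t(a)-s(a)$.
   Context: A group-like graph is a directed graph $(G\overset{s}{\underset{t}{\leftleftarrows}}A)$ with an associative multiplication morphism from its Cartesian square to itself making $G$ a group; it gives a two-sided action of $G$ on $A$ with $s,t$ equivariant ($s(g\cdot a\cdot h)=gs(a)h$, similarly for $t$). $\mathbf k$ is a field of characteristic $0$, $\mathbf k[G]$ the group algebra, $\mathbf k[A]$ the vector space with basis $A$ with the induced $\mathbf k[G]$-bimodule structure. $I(G)$ is the augmentation ideal of $\mathbf k[G]$, $I^0(G)=\mathbf k[G]$, and $I^n(A)\subseteq\mathbf k[A]$ is the span of all $v_1\cdot a\cdot v_2$ with $a\in A$, $v_1\in I^k(G)$, $v_2\in I^{n-k}(G)$, $0\le k\le n$. *)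

From HB Require Import structures.
From Stdlib Require Import Relation_Operators.
From mathcomp Require Import all_boot all_order all_algebra.
From mathcomp Require Import monoid.
From mathcomp Require Import finmap.
From mathcomp.multinomials Require Import monalg.

Set Implicit Arguments.
Unset Strict Implicit.
Unset Printing Implicit Defensive.

Import GRing.Theory.
Local Open Scope ring_scope.

(* The multiplication morphism from the
   (graph-theoretic) Cartesian square Q x Q -> Q amounts, on vertices, to
   the group law of G and, on edges (edges of Q x Q are A x G + G x A),
   to a left action  lact : G -> A -> A  and a right action
   ract : A -> G -> A; associativity says these are commuting actions and
   being a morphism says s and t are equivariant.                        *)
Definition group_like_graph (G : groupType) (A : Type)
    (s t : A -> G) (lact : G -> A -> A) (ract : A -> G -> A) : Prop :=
  (forall a, lact 1%g a = a) /\
  (forall g h a, lact (g * h)%g a = lact g (lact h a)) /\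
  (forall a, ract a 1%g = a) /\
  (forall a g h, ract a (g * h)%g = ract (ract a g) h) /\
  (forall g a h, lact g (ract a h) = ract (lact g a) h) /\
  (forall g a, s (lact g a) = (g * s a)%g /\ t (lact g a) = (g * t a)%g) /\
  (forall a h, s (ract a h) = (s a * h)%g /\ t (ract a h) = (t a * h)%g).

Definition undirected_adj (G : Type) (A : Type) (s t : A -> G) (g h : G) :=
  exists a : A, (s a = g /\ t a = h) \/ (s a = h /\ t a = g).

Definition path_connected (G : Type) (A : Type) (s t : A -> G) : Prop :=
  forall g h : G, clos_refl_trans G (undirected_adj s t) g h.

(* k[X] is the free k-vector space {malg k[X]} with basis << x >>.      *)

Definition gmul (k : fieldType) (G : groupType) (u v : {malg k[G]})
  : {malg k[G]} :=
  \sum_(g <- msupp u) \sum_(h <- msupp v) << u@_g * v@_h *g (g * h)%g >>.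

Definition gone (k : fieldType) (G : groupType) : {malg k[G]} := << 1%g >>.

Definition augm (k : fieldType) (G : groupType) (u : {malg k[G]}) : k :=
  \sum_(g <- msupp u) u@_g.

Definition bimod (k : fieldType) (G : groupType) (A : choiceType)
    (lact : G -> A -> A) (ract : A -> G -> A)
    (v1 : {malg k[G]}) (x : {malg k[A]}) (v2 : {malg k[G]}) : {malg k[A]} :=
  \sum_(g <- msupp v1) \sum_(a <- msupp x) \sum_(h <- msupp v2)
     << v1@_g * x@_a * v2@_h *g ract (lact g a) h >>.

Definition span (R : ringType) (V : lmodType R) (P : V -> Prop) (w : V) :=
  exists r : seq (R * V), (forall p, p \in r -> P p.2) /\
                          w = \sum_(p <- r) p.1 *: p.2.

Definition augI (k : fieldType) (G : groupType) (u : {malg k[G]}) : Prop :=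
  augm u = 0.

Fixpoint Ipow (k : fieldType) (G : groupType) (n : nat) : {malg k[G]} -> Prop :=
  match n with
  | 0 => fun _ => True
  | n'.+1 => span (fun w => exists u v, Ipow n' u /\ augI v /\ w = gmul u v)
  end.

Definition IpowA (k : fieldType) (G : groupType) (A : choiceType)
    (lact : G -> A -> A) (ract : A -> G -> A) (n : nat) : {malg k[A]} -> Prop :=
  span (fun x => exists (a : A) (v1 v2 : {malg k[G]}) (j : nat),
          [/\ (j <= n)%N, Ipow j v1, Ipow (n - j) v2 &
              x = bimod lact ract v1 << a >> v2]).

Definition phi (k : fieldType) (G : groupType) (A : choiceType)
    (s t : A -> G) (x : {malg k[A]}) : {malg k[G]} :=
  \sum_(a <- msupp x) x@_a *: (<< t a >> - << s a >>).

(* phi is a bimodule map sending a to t(a) - s(a), an element of I(G); hence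
   phi(v1 . a . v2) = v1 (t(a) - s(a)) v2 lies in I^j I I^(n-j), inside
   I^(n+1).  Conversely, I^(n+1) is spanned by products u v with u in I^n and
   v in I.  Such a v is a combination of the g - 1, and by path-connectedness
   each g - 1 is phi of a signed sum of the edges along a path from 1 to g.  So
   u v is a combination of the u phi(a) = phi(u . a . 1), where u . a . 1 lies
   in I^n(A). *)

From Pilot Require Import Defs.
From HB Require Import structures.
From Stdlib Require Import Relation_Operators.
From mathcomp Require Import all_boot all_order all_algebra.
From mathcomp Require Import monoid.
From mathcomp Require Import finmap.
From mathcomp.multinomials Require Import monalg.

Set Implicit Arguments.
Unset Strict Implicit.
Unset Printing Implicit Defensive.
Import GRing.Theory.
Local Open Scope ring_scope.

Section LinearExtension.
Variables (k : fieldType) (K : choiceType) (V : lmodType k).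
Implicit Types (F : K -> V) (x : {malg k[K]}).

Definition lin_ext F x : V := \sum_(a <- msupp x) x@_a *: F a.

Lemma lin_ext_subset F x (d : {fset K}) :
  (msupp x `<=` d)%fset -> lin_ext F x = \sum_(a <- d) x@_a *: F a.
Proof.
move=> sxd; rewrite /lin_ext (big_fset_incl _ sxd) // => a _ /mcoeff_outdom ->.
by rewrite scale0r.
Qed.

Lemma lin_ext_is_linear F : linear (lin_ext F).
Proof.
move=> c x y; pose d := (msupp x `|` msupp y)%fset.
have sxd : (msupp x `<=` d)%fset by apply: fsubsetUl.
have syd : (msupp y `<=` d)%fset by apply: fsubsetUr.
have szd : (msupp (c *: x + y) `<=` d)%fset.
  by apply: fsubset_trans (msuppD_le _ _) _; apply: fsetSU; apply: msuppZ_le.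
rewrite !(lin_ext_subset _ sxd, lin_ext_subset _ syd, lin_ext_subset _ szd).
rewrite scaler_sumr -big_split; apply: eq_bigr => a _.
by rewrite mcoeffD mcoeffZ scalerDl scalerA.
Qed.

HB.instance Definition _ F :=
  GRing.isLinear.Build k {malg k[K]} V *:%R (lin_ext F) (lin_ext_is_linear F).

Lemma lin_extU F a : lin_ext F << a >> = F a.
Proof. by rewrite (lin_ext_subset _ msuppU_le) big_seq_fset1 mcoeffUU scale1r. Qed.

Lemma eq_lin_ext F F' x : F =1 F' -> lin_ext F x = lin_ext F' x.
Proof. by move=> eqF; apply: eq_bigr => a _; rewrite eqF. Qed.

Lemma lin_extZD_fun c F F' x :
  lin_ext (fun a => c *: F a + F' a) x = c *: lin_ext F x + lin_ext F' x.
Proof.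
rewrite /lin_ext scaler_sumr -big_split; apply: eq_bigr => a _.
by rewrite scalerDr !scalerA mulrC.
Qed.

Lemma lin_ext_cst (z : V) x : lin_ext (fun=> z) x = (\sum_(a <- msupp x) x@_a) *: z.
Proof. by rewrite /lin_ext scaler_suml. Qed.

End LinearExtension.

Lemma lin_ext_comp (k : fieldType) (K : choiceType) (V W : lmodType k)
    (f : {linear V -> W}) (F : K -> V) (x : {malg k[K]}) :
  f (lin_ext F x) = lin_ext (f \o F) x.
Proof. by rewrite linear_sum; apply: eq_bigr => a _; rewrite linearZ. Qed.

Lemma malgUZ (k : fieldType) (K : choiceType) (c : k) (a : K) :
  << c *g a >> = c *: << a >>.
Proof.
by apply/malgP => b; rewrite mcoeffZ !mcoeffU; case: eqP; rewrite ?mulr1 ?mulr0.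
Qed.

Lemma lin_ext_basis (k : fieldType) (K : choiceType) (x : {malg k[K]}) :
  lin_ext (fun a => << a >>) x = x.
Proof. by rewrite [RHS]monalgE; apply: eq_bigr => a _; rewrite malgUZ. Qed.

Section Subspace.
Variables (k : fieldType) (V : lmodType k).
Implicit Types (P Q : V -> Prop).

Definition subspace Q := Q 0 /\ forall c x y, Q x -> Q y -> Q (c *: x + y).

Lemma subspaceZ Q c x : subspace Q -> Q x -> Q (c *: x).
Proof. by move=> [Q0 QZD] Qx; rewrite -[_ *: _]addr0; apply: QZD. Qed.

Lemma subspace_sum Q (I : eqType) (r : seq I) (f : I -> V) :
  subspace Q -> {in r, forall i, Q (f i)} -> Q (\sum_(i <- r) f i).
Proof.
move=> [Q0 QZD]; elim: r => [|i r IHr] Qf; first by rewrite big_nil.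
rewrite big_cons -[f i]scale1r; apply: QZD; first by apply: Qf; rewrite inE eqxx.
by apply: IHr => j rj; apply: Qf; rewrite inE rj orbT.
Qed.

Lemma lin_ext_closed Q (K : choiceType) (F : K -> V) :
  subspace Q -> (forall a, Q (F a)) -> forall x, Q (lin_ext F x).
Proof. by move=> subQ QF x; apply: subspace_sum => // a _; apply: subspaceZ. Qed.

Lemma span_subspace P : subspace (Defs.span P).
Proof.
split; first by exists [::]; rewrite big_nil.
move=> c _ _ [r [Pr ->]] [r' [Pr' ->]].
exists ([seq (c * p.1, p.2) | p <- r] ++ r'); split.
  by move=> p; rewrite mem_cat => /orP[/mapP[q /Pr Pq ->] | /Pr'].
rewrite big_cat big_map scaler_sumr; congr (_ + _).
by apply: eq_bigr => p _; rewrite scalerA.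
Qed.

Lemma span_gen P x : P x -> Defs.span P x.
Proof.
move=> Px; exists [:: (1, x)]; rewrite big_seq1 scale1r.
by split=> // p; rewrite inE => /eqP ->.
Qed.

Lemma span_min P Q x : subspace Q -> (forall y, P y -> Q y) -> Defs.span P x -> Q x.
Proof.
by move=> subQ PQ [r [Pr ->]]; apply: subspace_sum => // p /Pr /PQ; apply: subspaceZ.
Qed.

End Subspace.

Lemma subspace_preim (k : fieldType) (V W : lmodType k) (f : {linear W -> V})
    (Q : V -> Prop) :
  subspace Q -> subspace (fun x => Q (f x)).
Proof.
move=> [Q0 QZD]; split; first by rewrite linear0.
by move=> c x y Qx Qy; rewrite linearP; apply: QZD.
Qed.

Lemma subspace_image (k : fieldType) (V W : lmodType k) (f : {linear V -> W})
    (Q : V -> Prop) :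
  subspace Q -> subspace (fun w => exists x, Q x /\ f x = w).
Proof.
move=> [Q0 QZD]; split; first by exists 0; rewrite linear0.
move=> c _ _ [x [Qx <-]] [y [Qy <-]]; exists (c *: x + y).
by rewrite linearP; split=> //; apply: QZD.
Qed.

Section GroupAlgebra.
Variables (k : fieldType) (G : groupType).
Local Notation KG := {malg k[G]}.
Implicit Types (g h : G) (u v w : KG).

Definition lmulg g : KG -> KG := lin_ext (fun h => << (g * h)%g >>).

Lemma gmulE u v : gmul u v = lin_ext (lmulg^~ v) u.
Proof.
apply: eq_bigr => g _; rewrite /lmulg /lin_ext scaler_sumr.
by apply: eq_bigr => h _; rewrite malgUZ scalerA.
Qed.

Lemma gmul_is_linear u : linear (gmul u).
Proof.
move=> c v w; rewrite !gmulE -lin_extZD_fun; apply: eq_lin_ext => g.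
exact: linearP.
Qed.

HB.instance Definition _ u :=
  GRing.isLinear.Build k KG KG *:%R (gmul u) (gmul_is_linear u).

(* Right multiplication gets a name so that it can carry a linear instance. *)
Definition gmulr v u := gmul u v.

Lemma gmulr_is_linear v : linear (gmulr v).
Proof. by move=> c u w; rewrite /gmulr !gmulE linearP. Qed.

HB.instance Definition _ v :=
  GRing.isLinear.Build k KG KG *:%R (gmulr v) (gmulr_is_linear v).

Lemma gmulU g v : gmul << g >> v = lmulg g v.
Proof. by rewrite gmulE lin_extU. Qed.

Lemma gmulUU g h : gmul << g >> << h >> = << (g * h)%g >> :> KG.
Proof. by rewrite gmulU /lmulg lin_extU. Qed.

Lemma gmulBr u v w : gmul u (v - w) = gmul u v - gmul u w.
Proof. exact: linearB. Qed.

Lemma gmulBl u v w : gmul (u - v) w = gmul u w - gmul v w.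
Proof. exact: (linearB (gmulr w)). Qed.

Lemma gmul_basis_expand u v w : gmul (gmul u v) w =
  lin_ext (fun g => lin_ext (fun h => gmul (gmul << g >> v) << h >>) w) u.
Proof.
rewrite -{1}[u]lin_ext_basis -[gmul _ v]/(gmulr v _) lin_ext_comp.
rewrite -[gmul _ w]/(gmulr w _) lin_ext_comp; apply: eq_lin_ext => g /=.
by rewrite -[gmulr w _]/(gmul _ w) -{1}[w]lin_ext_basis lin_ext_comp.
Qed.

Lemma lmulgM g h w : lmulg g (lmulg h w) = lmulg (g * h) w.
Proof.
by rewrite /lmulg lin_ext_comp; apply: eq_lin_ext => l; rewrite /= lin_extU mulgA.
Qed.

Lemma gmulA u v w : gmul (gmul u v) w = gmul u (gmul v w).
Proof.
rewrite [gmul u v]gmulE -[gmul _ w]/(gmulr w _) lin_ext_comp [RHS]gmulE.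
apply: eq_lin_ext => g /=; rewrite [gmul v w]gmulE lin_ext_comp [RHS]lin_ext_comp.
by apply: eq_lin_ext => h /=; rewrite /gmulr gmulU -lmulgM.
Qed.

Lemma gmul1l v : gmul (gone k G) v = v.
Proof.
by rewrite gmulU -[RHS]lin_ext_basis; apply: eq_lin_ext => h; rewrite mul1g.
Qed.

Lemma gmul1r u : gmul u (gone k G) = u.
Proof.
rewrite gmulE -[RHS]lin_ext_basis; apply: eq_lin_ext => g.
by rewrite /lmulg lin_extU mulg1.
Qed.

Lemma augm_subset v (d : {fset G}) :
  (msupp v `<=` d)%fset -> augm v = \sum_(g <- d) v@_g.
Proof. by move=> svd; rewrite /augm (big_fset_incl _ svd) // => g _ /mcoeff_outdom. Qed.

Lemma augm_is_scalar : scalar (@augm k G).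
Proof.
move=> c u v; pose d := (msupp u `|` msupp v)%fset.
have sud : (msupp u `<=` d)%fset by apply: fsubsetUl.
have svd : (msupp v `<=` d)%fset by apply: fsubsetUr.
have swd : (msupp (c *: u + v) `<=` d)%fset.
  by apply: fsubset_trans (msuppD_le _ _) _; apply: fsetSU; apply: msuppZ_le.
rewrite (augm_subset sud) (augm_subset svd) (augm_subset swd) mulr_sumr -big_split.
by apply: eq_bigr => g _; rewrite mcoeffD mcoeffZ.
Qed.

HB.instance Definition _ :=
  GRing.isLinear.Build k KG k *%R (@augm k G) augm_is_scalar.

Lemma augmU g : augm << g >> = 1 :> k.
Proof. by rewrite /augm msuppU oner_eq0 big_seq_fset1 mcoeffUU. Qed.

Lemma augmB u v : augm (u - v) = augm u - augm v.
Proof. exact: linearB. Qed.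

Lemma augm_lin_ext (F : G -> KG) v :
  augm (lin_ext F v) = \sum_(g <- msupp v) v@_g * augm (F g).
Proof. by rewrite linear_sum; apply: eq_bigr => g _; rewrite linearZ. Qed.

Lemma augm_lmulg g v : augm (lmulg g v) = augm v.
Proof. by rewrite augm_lin_ext; apply: eq_bigr => h _; rewrite augmU mulr1. Qed.

Lemma augm_gmul u v : augm (gmul u v) = augm u * augm v.
Proof.
by rewrite gmulE augm_lin_ext mulr_suml; apply: eq_bigr => g _; rewrite augm_lmulg.
Qed.

Lemma Ipow_subspace n : subspace (@Ipow k G n).
Proof. by case: n => [|n]; [split | apply: span_subspace]. Qed.

Lemma Ipow_gmulr n u v : Ipow n u -> Ipow n (gmul u v).
Proof.
case: n => [//|n] /= Iu.
apply: (span_min (subspace_preim (gmulr v) (span_subspace _)) _ Iu).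
move=> _ [u1 [w [Iu1 [Iw ->]]]]; apply: span_gen; exists u1, (gmul w v).
by do 2 split=> //; [rewrite /augI augm_gmul Iw mul0r | apply: gmulA].
Qed.

Lemma Ipow_gmul m n u v : Ipow m u -> Ipow n v -> Ipow (m + n) (gmul u v).
Proof.
elim: n v => [|n IHn] v Iu; first by rewrite addn0 => _; apply: Ipow_gmulr.
rewrite addnS /= => Iv.
apply: (span_min (subspace_preim (gmul u) (span_subspace _)) _ Iv).
move=> _ [v1 [w [Iv1 [Iw ->]]]]; apply: span_gen; exists (gmul u v1), w.
by split; [apply: IHn | split=> //; apply/esym/gmulA].
Qed.

Lemma Ipow1 v : augI v -> Ipow 1 v.
Proof. by move=> Iv; apply: span_gen; exists (gone k G), v; rewrite gmul1l. Qed.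

Lemma augI_lin_ext v : augI v -> lin_ext (fun g => << g >> - << 1%g >>) v = v.
Proof.
move=> Iv; have -> : lin_ext (fun g => << g >> - << 1%g >>) v =
    1 *: lin_ext (fun g => << g >>) v + lin_ext (fun=> - << 1%g >>) v.
  by rewrite -lin_extZD_fun; apply: eq_lin_ext => g; rewrite scale1r.
by rewrite scale1r lin_ext_basis lin_ext_cst -/(augm v) Iv scale0r addr0.
Qed.

End GroupAlgebra.

Section GroupLikeGraph.
Variables (k : fieldType) (G : groupType) (A : choiceType) (s t : A -> G).
Variables (lact : G -> A -> A) (ract : A -> G -> A).
Local Notation KG := {malg k[G]}.
Local Notation KA := {malg k[A]}.

Definition edge_diff a : KG := << t a >> - << s a >>.

HB.instance Definition _ := GRing.Linear.copy (@phi k G A s t) (lin_ext edge_diff).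

Lemma phiU a : phi s t << a >> = edge_diff a.
Proof. exact: lin_extU. Qed.

Lemma augI_edge_diff a : augI (edge_diff a).
Proof. by rewrite /augI /edge_diff augmB !augmU subrr. Qed.

Lemma bimodU (v1 v2 : KG) a : bimod lact ract v1 << a >> v2 =
  lin_ext (fun g => lin_ext (fun h => << ract (lact g a) h >>) v2) v1.
Proof.
apply: eq_bigr => g _; rewrite msuppU oner_eq0 big_seq_fset1 mcoeffUU mulr1.
by rewrite /lin_ext scaler_sumr; apply: eq_bigr => h _; rewrite malgUZ scalerA.
Qed.

Lemma phi_connected g h : clos_refl_trans G (undirected_adj s t) g h ->
  exists y : KA, phi s t y = << h >> - << g >>.
Proof.
elim=> {g h} [g h [a [[<- <-] | [<- <-]]] | g | g h l _ [y Ey] _ [z Ez]].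
- by exists << a >>; rewrite phiU.
- by exists (- << a >>); rewrite linearN -opprB; congr (- _); apply: phiU.
- by exists 0; rewrite linear0 subrr.
- by exists (z + y); rewrite -[RHS](subrKA << h >>) -Ey -Ez linearD.
Qed.

Section Equivariance.
Hypothesis lact_equivariant :
  forall g a, s (lact g a) = (g * s a)%g /\ t (lact g a) = (g * t a)%g.
Hypothesis ract_equivariant :
  forall a h, s (ract a h) = (s a * h)%g /\ t (ract a h) = (t a * h)%g.

Lemma phi_bimodU v1 v2 a :
  phi s t (bimod lact ract v1 << a >> v2) = gmul (gmul v1 (edge_diff a)) v2.
Proof.
rewrite bimodU gmul_basis_expand lin_ext_comp; apply: eq_lin_ext => g.
rewrite /comp lin_ext_comp; apply: eq_lin_ext => h.
rewrite /comp; apply: etrans (phiU _) _; rewrite /edge_diff.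
have [-> ->] := ract_equivariant (lact g a) h; have [-> ->] := lact_equivariant g a.
by rewrite gmulBr gmulBl !gmulUU.
Qed.

Lemma phi_IpowA_in_Ipow n (x : KA) : IpowA lact ract n x -> Ipow n.+1 (phi s t x).
Proof.
apply: (span_min (Q := fun x => Ipow n.+1 (phi s t x))).
  exact: (subspace_preim (phi s t) (Ipow_subspace k G n.+1)).
move=> _ [a [v1 [v2 [j [jn Iv1 Iv2 ->]]]]]; rewrite phi_bimodU.
have := Ipow_gmul (Ipow_gmul Iv1 (Ipow1 (augI_edge_diff a))) Iv2.
by rewrite addn1 addSn subnKC.
Qed.

Lemma Ipow_in_phi_IpowA (connected : path_connected s t) n (w : KG) :
  Ipow n.+1 w -> exists x, IpowA lact ract n x /\ phi s t x = w.
Proof.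
set S := fun w : KG => exists x, IpowA lact ract n x /\ phi s t x = w.
have subS : subspace S by apply: subspace_image; apply: span_subspace.
apply: (span_min subS) => _ [u [v [Iu [Iv ->]]]].
rewrite -(augI_lin_ext Iv) lin_ext_comp.
apply: (lin_ext_closed subS) => g; rewrite /comp.
have [y <-] := phi_connected (connected 1%g g).
rewrite -[y]lin_ext_basis [phi s t _]lin_ext_comp lin_ext_comp.
apply: (lin_ext_closed subS) => a; rewrite /S.
exists (bimod lact ract u << a >> (gone k G)); split.
  by apply: span_gen; exists a, u, (gone k G), n; rewrite subnn leqnn.
by rewrite phi_bimodU gmul1r -phiU.
Qed.
End Equivariance.
End GroupLikeGraph.

Unset Implicit Arguments.
Local Close Scope ring_scope.

Theorem mainTheorem9 (k : fieldType) (hk : [pchar k]%R =i pred0)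
    (G : groupType) (A : choiceType) (s t : A -> G)
    (lact : G -> A -> A) (ract : A -> G -> A)
    (hQ : group_like_graph s t lact ract)
    (hconn : path_connected s t) :
  forall (n : nat) (w : {malg k[G]}),
    (exists x : {malg k[A]}, IpowA lact ract n x /\ phi s t x = w) <->
    Ipow n.+1 w.
Proof.
have [_ [_ [_ [_ [_ [lequiv requiv]]]]]] := hQ.
move=> n w; split; last exact: Ipow_in_phi_IpowA.
by move=> [x [IAx <-]]; apply: phi_IpowA_in_Ipow.
Qed.
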